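(* Let $n_\Gamma \le n$ be positive integers, let $H$ be a real symmetric $n\times n$ matrix, and let $R$ be a real $n_\Gamma\times n$ matrix with $RR^T = I_{n_\Gamma}$ (so that $R^TR$ is an orthogonal projection on $\mathbb{R}^n$). For $s_0>0$ define $$\widetilde{Y}(s_0) = R\,(s_0 I_n + iH)^{-1}R^T .$$ Then $\widetilde{Y}(s_0)$ is invertible, and the $n_\Gamma\times n_\Gamma$ matrix $$\bar{H}_{\Gamma,\Gamma} = (-i)\big(\widetilde{Y}(s_0)^{-1} - s_0 I_{n_\Gamma}\big)$$ is (complex) symmetric and its imaginary part $\operatorname{Im}\bar{H}_{\Gamma,\Gamma}$ (taken entrywise) is negative semidefinite; equivalently $\operatorname{Im}\bar{H}_{\Gamma,\Gamma} = -\operatorname{Re}\big(\widetilde{Y}(s_0)^{-1}-s_0 I_{n_\Gamma}\big)\le 0$.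
   Context: Here $H$ plays the role of the (discretized) Hamiltonian $H_{\mathrm{II},\mathrm{II}}$ restricted to an exterior region, $R$ is the restriction operator from the exterior region to a boundary layer $\Gamma$, and $\widetilde{Y}(s)$ is the Laplace transform of $Y(t)=Re^{-iHt}R^T$. The matrix $\bar H_{\Gamma,\Gamma}$ is the effective boundary Hamiltonian of the absorbing boundary condition $i\partial_t\delta\rho_{\Gamma,\Gamma} = [\bar H_{\Gamma,\Gamma},\delta\rho_{\Gamma,\Gamma}] + (\text{source terms})$, chosen so that $Z(t)=e^{-i\bar H_{\Gamma,\Gamma}t}$ satisfies $\widetilde Z(s_0)=\widetilde Y(s_0)$. For a complex matrix $M$, $\operatorname{Re}M$ and $\operatorname{Im}M$ denote the entrywise real and imaginary parts; ''$\le 0$'' means negative semidefinite. *)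

From HB Require Import structures.
From mathcomp Require Import all_boot all_order all_algebra.
From mathcomp Require Export complex.
Set Implicit Arguments. Unset Strict Implicit. Unset Printing Implicit Defensive.
Import Order.TTheory GRing.Theory Num.Theory.
Local Open Scope ring_scope.

Definition cmx (R : rcfType) (m n : nat) (A : 'M[R]_(m, n)) : 'M[R[i]]_(m, n) :=
  map_mx (fun x => x%:C%C) A.

Definition cReMx (R : rcfType) (m n : nat) (A : 'M[R[i]]_(m, n)) : 'M[R]_(m, n) :=
  map_mx (@complex.Re R) A.
Definition cImMx (R : rcfType) (m n : nat) (A : 'M[R[i]]_(m, n)) : 'M[R]_(m, n) :=
  map_mx (@complex.Im R) A.

Definition negsemidef (R : rcfType) (n : nat) (A : 'M[R]_n) : Prop :=
  forall v : 'cV[R]_n, (v^T *m A *m v) 0 0 <= 0.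

Definition Ytilde (R : rcfType) (m n : nat) (H : 'M[R]_n) (Rm : 'M[R]_(m, n)) (s0 : R)
  : 'M[R[i]]_m :=
  cmx Rm *m invmx ((s0%:C)%C%:M + ('i)%C *: cmx H) *m (cmx Rm)^T.

Definition Hbar (R : rcfType) (m n : nat) (H : 'M[R]_n) (Rm : 'M[R]_(m, n)) (s0 : R)
  : 'M[R[i]]_m :=
  (- ('i)%C) *: (invmx (Ytilde H Rm s0) - (s0%:C)%C%:M).

From mathcomp Require Import all_boot all_order all_algebra.
From mathcomp Require Import complex.
From mathcomp Require Import ring lra.
Set Implicit Arguments. Unset Strict Implicit. Unset Printing Implicit Defensive.
Import Order.TTheory GRing.Theory Num.Theory.
Local Open Scope ring_scope.

(* Put A := s0 + iH.  As H is real symmetric, p^* H p is real, so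
   Re (p^* A p) = s0 |p|^2: A is coercive, hence invertible.  Coercivity passes
   to the inverse of the compression Y = R A^-1 R^T: for q := Y^-1 p and
   u := A^-1 R^T q we get R u = p and, R being real, p^* Y^-1 p = u^* A u,
   while |R u| <= |u| because R R^T = 1.  The same computation with Y x = 0
   gives u^* A u = 0, so u = 0 and x = R R^T x = R A u = 0.  Finally
   Im Hbar = - Re (Y^-1 - s0), and for real v,
   v^T Re (Y^-1) v = Re (v^* Y^-1 v) >= s0 |v|^2; Hbar is symmetric because
   A^T = A. *)

Lemma ker0_unitmx (F : fieldType) n (M : 'M[F]_n) :
  (forall p : 'cV[F]_n, M *m p = 0 -> p = 0) -> M \in unitmx.
Proof.
move=> Mker0; rewrite -unitmx_tr -row_free_unit; apply: inj_row_free => v vM0.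
have : v^T = 0 by apply: Mker0; rewrite -(trmxK M) -trmx_mul vM0 trmx0.
by move/(congr1 trmx); rewrite trmxK trmx0.
Qed.

Section ComplexMatrices.
Variable R : rcfType.
Local Notation C := R[i].
Local Notation Re := (@complex.Re R).
Local Notation Im := (@complex.Im R).

Lemma Re_realcM (a : R) (x : C) : Re (a%:C%C * x) = a * Re x.
Proof. by case: x => u v /=; ring. Qed.

Lemma Im_realcM (a : R) (x : C) : Im (a%:C%C * x) = a * Im x.
Proof. by case: x => u v /=; ring. Qed.

Lemma Re_conjcM (x : C) : Re (x^* * x)%C = Re x ^+ 2 + Im x ^+ 2.
Proof. by case: x => u v /=; ring. Qed.

Lemma Im_conjc_id (x : C) : x^*%C = x -> Im x = 0.
Proof. by case: x => u v /= [] ?; lra. Qed.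

Definition sqnormr n (w : 'cV[R]_n) : R := (w^T *m w) 0 0.

(* Splitting into real and imaginary parts reduces contraction by a real
   matrix to the real case. *)
Definition sqnormc n (p : 'cV[C]_n) : R := sqnormr (cReMx p) + sqnormr (cImMx p).

Definition hform n (A : 'M[C]_n) (p : 'cV[C]_n) : C := ((map_mx conjc p)^T *m A *m p) 0 0.

Definition coercive n (c : R) (A : 'M[C]_n) : Prop :=
  forall p : 'cV[C]_n, c * sqnormc p <= Re (hform A p).

Lemma sqnormrE n (w : 'cV[R]_n) : sqnormr w = \sum_j w j 0 ^+ 2.
Proof. by rewrite /sqnormr mxE; apply: eq_bigr => j _; rewrite mxE expr2. Qed.

Lemma sqnormr_ge0 n (w : 'cV[R]_n) : 0 <= sqnormr w.
Proof. by rewrite sqnormrE sumr_ge0 // => j _; rewrite sqr_ge0. Qed.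

Lemma sqnormr_eq0 n (w : 'cV[R]_n) : sqnormr w = 0 -> w = 0.
Proof.
rewrite sqnormrE => /eqP; rewrite psumr_eq0 => [/allP w0|j _]; last exact: sqr_ge0.
apply/matrixP => j k; rewrite ord1 mxE; apply/eqP.
by rewrite -sqrf_eq0; exact: w0 (mem_index_enum j).
Qed.

Lemma sqnormc_ge0 n (p : 'cV[C]_n) : 0 <= sqnormc p.
Proof. by rewrite addr_ge0 ?sqnormr_ge0. Qed.

Lemma sqnormc_eq0 n (p : 'cV[C]_n) : sqnormc p = 0 -> p = 0.
Proof.
move=> /eqP; rewrite paddr_eq0 ?sqnormr_ge0 // => /andP[/eqP Re0 /eqP Im0].
apply/matrixP => j k; have /matrixP/(_ j k) := sqnormr_eq0 Re0.
have /matrixP/(_ j k) := sqnormr_eq0 Im0.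
by rewrite !mxE; case: (p j k) => u v /= -> ->.
Qed.

Lemma sqnormr_contract m n (B : 'M[R]_(m, n)) (w : 'cV[R]_n) :
  B *m B^T = 1%:M -> sqnormr (B *m w) <= sqnormr w.
Proof.
move=> BBT; set P := B^T *m B; set Q := 1%:M - P.
have QTQ : Q^T *m Q = Q.
  have PP : P *m P = P by rewrite /P mulmxA -(mulmxA B^T) BBT mulmx1.
  have QT : Q^T = Q by rewrite /Q linearB /= trmx1 /P trmx_mul trmxK.
  by rewrite QT /Q mulmxBl mul1mx mulmxBr mulmx1 PP subrr subr0.
have split_w : w^T *m w = (B *m w)^T *m (B *m w) + (Q *m w)^T *m (Q *m w).
  rewrite !trmx_mul -!mulmxA (mulmxA Q^T) QTQ (mulmxA B^T) -/P -mulmxDr -mulmxDl.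
  by rewrite /Q addrC subrK mul1mx.
by rewrite /sqnormr split_w [X in _ <= X]mxE lerDl; exact: sqnormr_ge0.
Qed.

Lemma cmxM m n k (A : 'M[R]_(m, n)) (B : 'M[R]_(n, k)) : cmx (A *m B) = cmx A *m cmx B.
Proof. exact: map_mxM. Qed.

Lemma cmxT m n (A : 'M[R]_(m, n)) : cmx A^T = (cmx A)^T.
Proof. by rewrite /cmx map_trmx. Qed.

Lemma conjc_cmx m n (A : 'M[R]_(m, n)) : map_mx conjc (cmx A) = cmx A.
Proof. by apply/matrixP => i j; rewrite !mxE conjc_real. Qed.

Lemma cReMx_cmx m n (A : 'M[R]_(m, n)) : cReMx (cmx A) = A.
Proof. by apply/matrixP => i j; rewrite !mxE. Qed.

Lemma cImMx_cmx m n (A : 'M[R]_(m, n)) : cImMx (cmx A) = 0.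
Proof. by apply/matrixP => i j; rewrite !mxE. Qed.

Lemma cReMx_cmxMl m n k (A : 'M[R]_(m, n)) (p : 'M[C]_(n, k)) :
  cReMx (cmx A *m p) = A *m cReMx p.
Proof.
apply/matrixP => i j; rewrite !mxE (raddf_sum (Re : Rcomplex R -> R)).
by apply: eq_bigr => l _; rewrite !mxE; apply: Re_realcM.
Qed.

Lemma cImMx_cmxMl m n k (A : 'M[R]_(m, n)) (p : 'M[C]_(n, k)) :
  cImMx (cmx A *m p) = A *m cImMx p.
Proof.
apply/matrixP => i j; rewrite !mxE (raddf_sum (Im : Rcomplex R -> R)).
by apply: eq_bigr => l _; rewrite !mxE; apply: Im_realcM.
Qed.

Lemma sqnormc_cmx n (v : 'cV[R]_n) : sqnormc (cmx v) = sqnormr v.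
Proof.
rewrite /sqnormc cReMx_cmx cImMx_cmx [sqnormr 0]sqnormrE big1 ?addr0 // => j _.
by rewrite mxE expr0n.
Qed.

Lemma sqnormc_contract m n (B : 'M[R]_(m, n)) (p : 'cV[C]_n) :
  B *m B^T = 1%:M -> sqnormc (cmx B *m p) <= sqnormc p.
Proof.
move=> BBT; rewrite /sqnormc cReMx_cmxMl cImMx_cmxMl.
by rewrite lerD ?sqnormr_contract.
Qed.

Lemma cReMx_cmxMr m n k (p : 'M[C]_(m, n)) (A : 'M[R]_(n, k)) :
  cReMx (p *m cmx A) = cReMx p *m A.
Proof.
apply/matrixP => i j; rewrite !mxE (raddf_sum (Re : Rcomplex R -> R)).
by apply: eq_bigr => l _; rewrite !mxE mulrC [RHS]mulrC; apply: Re_realcM.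
Qed.

Lemma cReMx_scalar n (a : C) : cReMx (a%:M : 'M_n) = (Re a)%:M.
Proof.
apply/matrixP => i j; rewrite !mxE.
exact: (raddfMn (Re : Rcomplex R -> R)).
Qed.

Lemma cReMxN m n (M : 'M[C]_(m, n)) : cReMx (- M) = - cReMx M.
Proof. exact: (map_mxN (Re : Rcomplex R -> R)). Qed.

Lemma cReMxB m n (M N : 'M[C]_(m, n)) : cReMx (M - N) = cReMx M - cReMx N.
Proof. exact: (map_mxB (Re : Rcomplex R -> R)). Qed.

Lemma cImMx_scaleNi m n (M : 'M[C]_(m, n)) : cImMx (- 'i%C *: M) = - cReMx M.
Proof.
apply/matrixP => i j; rewrite !mxE mulNr mulrC.
by rewrite (raddfN (Im : Rcomplex R -> R)); congr (- _); apply: ImiRe.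
Qed.

Lemma hformD n (A B : 'M[C]_n) p : hform (A + B) p = hform A p + hform B p.
Proof. by rewrite /hform mulmxDr mulmxDl mxE. Qed.

Lemma hformZ n (a : C) (A : 'M[C]_n) p : hform (a *: A) p = a * hform A p.
Proof. by rewrite /hform -scalemxAr -scalemxAl mxE. Qed.

Lemma Re_hform1 n (p : 'cV[C]_n) : Re (hform 1%:M p) = sqnormc p.
Proof.
rewrite /hform mulmx1 mxE (raddf_sum (Re : Rcomplex R -> R)) /sqnormc !sqnormrE.
by rewrite -big_split; apply: eq_bigr => j _; rewrite !mxE; apply: Re_conjcM.
Qed.

Lemma conjc_hform n (A : 'M[C]_n) p : (hform A p)^*%C = hform (map_mx conjc A)^T p.
Proof.
transitivity ((map_mx conjc ((map_mx conjc p)^T *m A *m p))^T 0 0).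
  by rewrite [RHS]mxE [RHS]mxE.
rewrite !map_mxM !trmx_mul mulmxA /hform; congr ((_ *m _ *m _) 0 0).
by apply/matrixP => i j; rewrite !mxE; apply: conjcK.
Qed.

Lemma Im_hform_sym n (H : 'M[R]_n) p : H^T = H -> Im (hform (cmx H) p) = 0.
Proof. by move=> HT; apply: Im_conjc_id; rewrite conjc_hform conjc_cmx -cmxT HT. Qed.

Lemma Re_hform_shift_iH n (H : 'M[R]_n) (s : R) p : H^T = H ->
  Re (hform (s%:C%C%:M + 'i%C *: cmx H) p) = s * sqnormc p.
Proof.
move=> HT; rewrite hformD -scalemx1 !hformZ.
transitivity (Re (s%:C%C * hform 1%:M p) + Re ('i%C * hform (cmx H) p)).
  exact: (raddfD (Re : Rcomplex R -> R)).
by rewrite Re_realcM Re_hform1 [_ * hform _ _]mulrC ReiNIm Im_hform_sym // oppr0 addr0.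
Qed.

Lemma coercive_shift_iH n (H : 'M[R]_n) (s : R) :
  H^T = H -> coercive s (s%:C%C%:M + 'i%C *: cmx H).
Proof. by move=> HT p; rewrite Re_hform_shift_iH. Qed.

Lemma coercive_hform_eq0 n c (A : 'M[C]_n) p :
  0 < c -> coercive c A -> hform A p = 0 -> p = 0.
Proof.
move=> c_gt0 A_coercive hAp0; apply: sqnormc_eq0; apply/eqP.
rewrite eq_le sqnormc_ge0 andbT -(pmulr_rle0 _ c_gt0).
by have := A_coercive p; rewrite hAp0.
Qed.

Lemma coercive_unitmx n c (A : 'M[C]_n) : 0 < c -> coercive c A -> A \in unitmx.
Proof.
move=> c_gt0 A_coercive; apply: ker0_unitmx => p Ap0.
by apply: (coercive_hform_eq0 c_gt0 A_coercive); rewrite /hform -mulmxA Ap0 mulmx0 mxE.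
Qed.

Lemma hform_trmx_cmx m n (A : 'M[C]_n) (B : 'M[R]_(m, n)) p q :
  A *m p = (cmx B)^T *m q -> hform A p = ((map_mx conjc (cmx B *m p))^T *m q) 0 0.
Proof. by move=> Ap; rewrite /hform -mulmxA Ap mulmxA -trmx_mul map_mxM conjc_cmx. Qed.

Section Compression.
Variables (m n : nat) (c : R) (A : 'M[C]_n) (B : 'M[R]_(m, n)).
Hypotheses (c_gt0 : 0 < c) (A_coercive : coercive c A) (BBT : B *m B^T = 1%:M).
Let Y := cmx B *m invmx A *m (cmx B)^T.

Lemma compression_unitmx : Y \in unitmx.
Proof.
have A_unit := coercive_unitmx c_gt0 A_coercive.
apply: ker0_unitmx => x Yx0.
set u := invmx A *m ((cmx B)^T *m x).
have Au : A *m u = (cmx B)^T *m x by rewrite /u mulKVmx.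
have u0 : u = 0.
  apply: (coercive_hform_eq0 c_gt0 A_coercive).
  by rewrite (hform_trmx_cmx Au) /u !mulmxA Yx0 map_mx0 trmx0 mul0mx mxE.
have cBBT : cmx B *m (cmx B)^T = 1%:M by rewrite -cmxT -cmxM BBT; apply: map_mx1.
by rewrite -[x]mul1mx -cBBT -mulmxA -Au u0 !mulmx0.
Qed.

Lemma coercive_invmx_compression : coercive c (invmx Y).
Proof.
move=> p; set q := invmx Y *m p.
set u := invmx A *m ((cmx B)^T *m q).
have A_unit := coercive_unitmx c_gt0 A_coercive.
have Au : A *m u = (cmx B)^T *m q by rewrite /u mulKVmx.
have Bu : cmx B *m u = p
  by rewrite /u !mulmxA -/Y mulmxV ?mul1mx // compression_unitmx.
have -> : hform (invmx Y) p = hform A u by rewrite (hform_trmx_cmx Au) Bu /hform -mulmxA.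
apply: le_trans (A_coercive u); rewrite -{1}Bu ler_pM2l //.
exact: sqnormc_contract.
Qed.

Lemma trmx_compression : A^T = A -> Y^T = Y.
Proof. by move=> AT; rewrite /Y !trmx_mul trmxK trmx_inv AT mulmxA. Qed.

End Compression.

Lemma Re_hform_cmx n (M : 'M[C]_n) (v : 'cV[R]_n) :
  Re (hform M (cmx v)) = (v^T *m cReMx M *m v) 0 0.
Proof.
transitivity (cReMx ((cmx v)^T *m M *m cmx v) 0 0).
  by rewrite /hform conjc_cmx [RHS]mxE.
by rewrite cReMx_cmxMr -cmxT cReMx_cmxMl.
Qed.

Lemma coercive_negsemidef n c (Z : 'M[C]_n) :
  coercive c Z -> negsemidef (cReMx (c%:C%C%:M - Z)).
Proof.
move=> Z_coercive v; have := Z_coercive (cmx v).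
rewrite sqnormc_cmx Re_hform_cmx cReMxB cReMx_scalar /=.
rewrite mulmxBr mulmxBl mul_mx_scalar -scalemxAl.
rewrite /sqnormr; move: (v^T *m cReMx Z *m v) (v^T *m v) => X V.
by rewrite !mxE subr_le0.
Qed.

End ComplexMatrices.

Theorem mainTheorem1 (R : rcfType) (nG n : nat) (H : 'M[R]_n) (Rm : 'M[R]_(nG, n))
  (s0 : R) :
  (0 < nG)%N -> (nG <= n)%N ->
  H^T = H -> Rm *m Rm^T = 1%:M -> 0 < s0 ->
  Ytilde H Rm s0 \in unitmx /\
  (Hbar H Rm s0)^T = Hbar H Rm s0 /\
  negsemidef (cImMx (Hbar H Rm s0)) /\
  cImMx (Hbar H Rm s0) = - cReMx (invmx (Ytilde H Rm s0) - (s0%:C)%C%:M).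
Proof.
move=> _ _ HT RRT s0_gt0.
have A_coercive := coercive_shift_iH s0 HT.
have AT : ((s0%:C)%C%:M + 'i%C *: cmx H)^T = (s0%:C)%C%:M + 'i%C *: cmx H.
  by rewrite linearD /= linearZ /= tr_scalar_mx -cmxT HT.
have Y_sym : (Ytilde H Rm s0)^T = Ytilde H Rm s0 := trmx_compression Rm AT.
have Im_Hbar : cImMx (Hbar H Rm s0) = - cReMx (invmx (Ytilde H Rm s0) - (s0%:C)%C%:M).
  exact: cImMx_scaleNi.
split; first exact: compression_unitmx s0_gt0 A_coercive RRT.
split; first by rewrite /Hbar linearZ /= linearB /= trmx_inv Y_sym tr_scalar_mx.
split=> //; rewrite Im_Hbar -cReMxN opprB.
exact: coercive_negsemidef (coercive_invmx_compression s0_gt0 A_coercive RRT).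
Qed.
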